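(* Let $q$ be a prime power, $q-1=ds$ with $d,s$ positive integers, let $r_0,\dots,r_{d-1}$ be positive integers, let $a_0,\dots,a_{d-1}\in\mathbb{F}_q^*$, let $\xi$ be a primitive element of $\mathbb{F}_q$ and $\omega=\xi^s$. Let $$f(x)=\frac{1}{d}\sum_{i=0}^{d-1}\sum_{j=0}^{d-1} a_i\,\omega^{-ij}\,x^{r_i+js}\in\mathbb{F}_q[x].$$ If $f$ is a permutation polynomial of $\mathbb{F}_q$, then its inverse over $\mathbb{F}_q$ is given by $$f^{-1}(x)=\frac{1}{d}\sum_{i=0}^{d-1}\sum_{j=0}^{d-1}\omega^{i(t_i-jr_i)}\left(\frac{x}{a_i}\right)^{\tilde r_i+js},$$ where $\tilde r_i,t_i\in\mathbb{Z}$ satisfy $1\le \tilde r_i<s$ and $r_i\tilde r_i+st_i=1$ (for each $i=0,\dots,d-1$).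
   Context: A polynomial $f\in\mathbb{F}_q[x]$ is a permutation polynomial of $\mathbb{F}_q$ if it induces a bijection of $\mathbb{F}_q$. A polynomial $g$ is the inverse of $f$ over $\mathbb{F}_q$ if $g(f(c))=c$ for all $c\in\mathbb{F}_q$ (equivalently $g(f(x))\equiv x\pmod{x^q-x}$). Since $d\mid q-1$, $d$ is invertible in $\mathbb{F}_q$, so $1/d$ makes sense. (The polynomial $f$ is the cyclotomic mapping with $f(0)=0$ and $f(x)=a_ix^{r_i}$ for $x\in\xi^i\langle\xi^d\rangle$.) *)

From HB Require Import structures.
From mathcomp Require Import all_boot all_order all_algebra all_field.
Set Implicit Arguments. Unset Strict Implicit. Unset Printing Implicit Defensive.
Import GRing.Theory.
Local Open Scope ring_scope.

Definition is_perm_poly (F : finFieldType) (p : {poly F}) : Prop :=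
  bijective (fun c : F => p.[c]).

Definition cyc_poly (F : fieldType) (d s : nat) (w : F)
    (a : 'I_d -> F) (r : 'I_d -> nat) : {poly F} :=
  (d%:R)^-1 *: \sum_(i < d) \sum_(j < d)
     (a i * w ^- (i * j)%N) *: 'X^(r i + j * s).

(* g(x) = 1/d * sum_i sum_j w^{i (t_i - j r_i)} (x / a_i)^{rt_i + j s},
   with (x/a_i)^e expanded as (a_i^-1)^e x^e; t_i is an integer. *)
Definition cyc_inv_poly (F : fieldType) (d s : nat) (w : F)
    (a : 'I_d -> F) (r rt : 'I_d -> nat) (t : 'I_d -> int) : {poly F} :=
  (d%:R)^-1 *: \sum_(i < d) \sum_(j < d)
     (w ^ ((i%:Z) * (t i - (j * r i)%N%:Z)) * (a i)^-1 ^+ (rt i + j * s))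
       *: 'X^(rt i + j * s).

From HB Require Import structures.
From mathcomp Require Import all_boot all_order all_algebra all_field.
From mathcomp Require Import ring.
Import GRing.Theory.
Set Implicit Arguments.
Unset Strict Implicit.
Local Open Scope ring_scope.

(* Write w = xi^s, a primitive d-th root of unity, and split the nonzero elements
   into the cosets {c : c^s = w^l}.  Summing over j is a character sum over the
   d-th roots of unity, so on the coset of l the polynomial f is the monomial
   a_l x^(r_l), and g(y) collapses to the terms w^(i t_i) (y/a_i)^(rt_i) with
   (y/a_i)^s = w^(i r_i).  By the Bezout relation r_i rt_i + s t_i = 1 such a term
   z lies in the coset of i and satisfies a_i z^(r_i) = y, i.e. f(z) = y.  For
   y = f(c), injectivity of f leaves only the term i = l, which equals c. *)

Lemma expf_card_pred (F : finFieldType) (x : F) : x != 0 -> x ^+ #|F|.-1 = 1.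
Proof.
move=> x0; apply: (mulIf x0); rewrite mul1r -exprSr prednK ?expf_card //.
by apply/card_gt0P; exists 0.
Qed.

Lemma sumr_expr_unity_root (F : fieldType) (n : nat) (u : F) :
  u ^+ n = 1 -> \sum_(j < n) u ^+ j = (u == 1)%:R * n%:R.
Proof.
have [->|u_neq1] := eqVneq u 1 => un1.
  by rewrite mul1r (eq_bigr (fun=> 1)) ?sumr_const ?card_ord // => j _; rewrite expr1n.
have /eqP := subrX1 u n; rewrite un1 subrr eq_sym mulf_eq0 subr_eq0.
by rewrite (negbTE u_neq1) mul0r => /eqP.
Qed.

Lemma horner_sum_geometric (R : comNzRingType) (n e s : nat) (b g c : R) :
  (\sum_(j < n) (b * g ^+ j) *: 'X^(e + j * s)).[c] =
    b * c ^+ e * \sum_(j < n) (g * c ^+ s) ^+ j.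
Proof.
rewrite horner_sum mulr_sumr; apply: eq_bigr => j _.
by rewrite hornerZ hornerXn exprD mulnC exprM exprMn mulrACA.
Qed.

Lemma horner0_sum_geometric (R : comNzRingType) (n e s : nat) (b g : R) :
  (0 < e)%N -> (\sum_(j < n) (b * g ^+ j) *: 'X^(e + j * s)).[0] = 0.
Proof. by move=> e_gt0; rewrite horner_sum_geometric expr0n gtn_eqF // mulr0 mul0r. Qed.

Lemma divf_eq1 (F : fieldType) (x y : F) : y != 0 -> (x / y == 1) = (x == y).
Proof.
move=> y0; apply/eqP/eqP => [xy1|->]; last exact: divff.
by rewrite -(divfK y0 x) xy1 mul1r.
Qed.

Section BezoutRoot.
Variables (F : fieldType) (w v : F) (k r rt s : nat) (t : int).
Hypotheses (w_neq0 : w != 0) (v_neq0 : v != 0).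
Hypothesis bezout : r%:Z * rt%:Z + s%:Z * t = 1.
Hypothesis v_coset : v ^+ s = w ^+ (k * r).

Lemma bezout_root_exprs : (w ^ (k%:Z * t) * v ^+ rt) ^+ s = w ^+ k.
Proof.
rewrite exprMn -exprM mulnC exprM v_coset -exprM !exprnP exprz_exp -expfzDr //.
congr (_ ^ _); rewrite -[RHS]mulr1 -bezout !PoszM; ring.
Qed.

Lemma bezout_root_exprr : (w ^ (k%:Z * t) * v ^+ rt) ^+ r = v.
Proof.
have v_rt_r : v ^+ (rt * r) = v * w ^ (- (k%:Z * r%:Z * t)).
  rewrite exprnP (_ : (rt * r)%N%:Z = 1 + s%:Z * - t); last first.
    by rewrite PoszM -bezout; ring.
  by rewrite expfzDr // expr1z -exprz_exp -exprnP v_coset exprnP exprz_exp PoszM mulrN.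
rewrite exprMn -exprM v_rt_r mulrCA !exprnP exprz_exp -expfzDr //.
by rewrite (_ : _ + _ = 0) ?expr0z ?mulr1 //; ring.
Qed.
End BezoutRoot.

Section CosetSums.
Variables (F : fieldType) (d s : nat) (w : F).
Hypothesis w_prim : d.-primitive_root w.

Lemma sum_indicator_unity_roots (b u : 'I_d -> F) :
  (forall i, u i ^+ d = 1) ->
  (d%:R)^-1 * \sum_(i < d) b i * \sum_(j < d) u i ^+ j = \sum_(i < d | u i == 1) b i.
Proof.
move=> ud; rewrite [RHS]big_mkcond mulr_sumr; apply: eq_bigr => i _.
rewrite sumr_expr_unity_root //; case: (u i == 1); last by rewrite mul0r !mulr0.
by rewrite mul1r mulrCA mulVf ?mulr1 // (prim_root_natf_neq0 w_prim).
Qed.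

Let w_neq0 : w != 0.
Proof. by rewrite (prim_root_eq0 w_prim) -lt0n (prim_order_gt0 w_prim). Qed.

Lemma cyc_polyE (a : 'I_d -> F) (r : 'I_d -> nat) :
  cyc_poly s w a r = (d%:R)^-1 *:
    \sum_(i < d) \sum_(j < d) (a i * (w ^+ i)^-1 ^+ j) *: 'X^(r i + j * s).
Proof. by congr (_ *: _); do 2!apply: eq_bigr => ? _; rewrite exprM exprVn. Qed.

Lemma cyc_inv_polyE (a : 'I_d -> F) (r rt : 'I_d -> nat) (t : 'I_d -> int) :
  cyc_inv_poly s w a r rt t = (d%:R)^-1 *: \sum_(i < d) \sum_(j < d)
    ((w ^ (i%:Z * t i) * (a i)^-1 ^+ rt i) * ((w ^+ (i * r i))^-1 * (a i)^-1 ^+ s) ^+ j)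
      *: 'X^(rt i + j * s).
Proof.
congr (_ *: _); apply: eq_bigr => i _; apply: eq_bigr => j _; congr (_ *: _).
rewrite mulrBr expfzDr // exprMn exprD mulrACA -!exprM exprVn; congr (_ * (_ * _)).
  by rewrite -PoszM -exprnN exprVn -exprM mulnCA mulnC.
by rewrite mulnC.
Qed.

Lemma horner_cyc_poly (a : 'I_d -> F) (r : 'I_d -> nat) (c : F) :
  (c ^+ s) ^+ d = 1 ->
  (cyc_poly s w a r).[c] = \sum_(i < d | c ^+ s == w ^+ i) a i * c ^+ r i.
Proof.
move=> csd; rewrite cyc_polyE hornerZ horner_sum.
under eq_bigr do rewrite horner_sum_geometric.
rewrite sum_indicator_unity_roots => [|i].
  by apply: eq_bigl => i; rewrite mulrC divf_eq1 ?expf_neq0.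
by rewrite exprMn csd mulr1 -exprVn -exprM mulnC exprM exprVn (prim_expr_order w_prim)
  invr1 expr1n.
Qed.

Lemma eq_prim_root_expr_ord (i j : 'I_d) : (w ^+ i == w ^+ j) = (i == j).
Proof. by rewrite (eq_prim_root_expr w_prim) !modn_small. Qed.

Lemma horner_cyc_poly_coset (a : 'I_d -> F) (r : 'I_d -> nat) (c : F) (l : 'I_d) :
  c ^+ s = w ^+ l -> (cyc_poly s w a r).[c] = a l * c ^+ r l.
Proof.
move=> csl; rewrite horner_cyc_poly; last first.
  by rewrite csl -exprM mulnC exprM (prim_expr_order w_prim) expr1n.
by rewrite (big_pred1 l) // => i /=; rewrite csl eq_prim_root_expr_ord eq_sym.
Qed.

Lemma horner0_cyc_poly (a : 'I_d -> F) (r : 'I_d -> nat) :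
  (forall i, 0 < r i)%N -> (cyc_poly s w a r).[0] = 0.
Proof.
move=> r_gt0; rewrite cyc_polyE hornerZ horner_sum big1 ?mulr0 // => i _.
exact: horner0_sum_geometric.
Qed.

Lemma horner0_cyc_inv_poly (a : 'I_d -> F) (r rt : 'I_d -> nat) (t : 'I_d -> int) :
  (forall i, 0 < rt i)%N -> (cyc_inv_poly s w a r rt t).[0] = 0.
Proof.
move=> rt_gt0; rewrite cyc_inv_polyE hornerZ horner_sum big1 ?mulr0 // => i _.
exact: horner0_sum_geometric.
Qed.

Lemma horner_cyc_inv_poly (a : 'I_d -> F) (r rt : 'I_d -> nat) (t : 'I_d -> int) (y : F) :
  (forall i, ((y / a i) ^+ s) ^+ d = 1) ->
  (cyc_inv_poly s w a r rt t).[y] =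
    \sum_(i < d | (y / a i) ^+ s == w ^+ (i * r i)) w ^ (i%:Z * t i) * (y / a i) ^+ rt i.
Proof.
move=> ysd; rewrite cyc_inv_polyE hornerZ horner_sum.
under eq_bigr do rewrite horner_sum_geometric.
have yaE i k : (a i)^-1 ^+ k * y ^+ k = (y / a i) ^+ k by rewrite -exprMn mulrC.
under eq_bigr do rewrite -(mulrA (w ^ _)) yaE -(mulrA (w ^- _)) yaE.
rewrite sum_indicator_unity_roots => [|i].
  by apply: eq_bigl => i; rewrite mulrC divf_eq1 ?expf_neq0.
by rewrite exprMn ysd mulr1 -exprVn -exprM mulnC exprM exprVn (prim_expr_order w_prim)
  invr1 expr1n.
Qed.

Lemma cyc_poly_coset_fiber (a : 'I_d -> F) (r : 'I_d -> nat) (c : F) (l : 'I_d) :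
  c ^+ s = w ^+ l -> a l != 0 -> ((cyc_poly s w a r).[c] / a l) ^+ s = w ^+ (l * r l).
Proof.
move=> csl al_neq0; rewrite (horner_cyc_poly_coset _ _ csl) mulrC mulKf //.
by rewrite -exprM mulnC exprM csl -exprM.
Qed.

Lemma cyc_poly_fiber_root (a : 'I_d -> F) (r rt : 'I_d -> nat) (t : 'I_d -> int)
    (c y : F) (i l : 'I_d) :
  injective (horner (cyc_poly s w a r)) -> c ^+ s = w ^+ l -> (cyc_poly s w a r).[c] = y ->
  y / a i != 0 -> (r i)%:Z * (rt i)%:Z + s%:Z * t i = 1 ->
  (y / a i) ^+ s = w ^+ (i * r i) -> w ^ (i%:Z * t i) * (y / a i) ^+ rt i = c /\ i = l.
Proof.
move=> f_inj csl fc ya_neq0 bezout ya_coset.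
have zs := bezout_root_exprs w_neq0 bezout ya_coset.
have z_c : w ^ (i%:Z * t i) * (y / a i) ^+ rt i = c.
  apply: f_inj; rewrite /= (horner_cyc_poly_coset _ _ zs) fc.
  rewrite (bezout_root_exprr w_neq0 ya_neq0 bezout ya_coset) mulrC divfK //.
  by apply: contraNneq ya_neq0 => ->; rewrite invr0 mulr0.
by split=> //; apply/eqP; rewrite -eq_prim_root_expr_ord -zs z_c csl.
Qed.
End CosetSums.

Theorem theorem3p3 (F : finFieldType) (d s : nat)
    (hd : (0 < d)%N) (hs : (0 < s)%N) (hq : #|F|.-1 = (d * s)%N)
    (r : 'I_d -> nat) (hr : forall i, (0 < r i)%N)
    (a : 'I_d -> F) (ha : forall i, a i != 0)
    (xi : F) (hxi : #|F|.-1.-primitive_root xi)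
    (rt : 'I_d -> nat) (t : 'I_d -> int)
    (hrt : forall i, (1 <= rt i)%N /\ (rt i < s)%N)
    (hrt_t : forall i, (r i)%:Z * (rt i)%:Z + s%:Z * t i = 1)
    (hperm : is_perm_poly (@cyc_poly F d s (xi ^+ s) a r)) :
  forall c : F,
    (@cyc_inv_poly F d s (xi ^+ s) a r rt t).[(@cyc_poly F d s (xi ^+ s) a r).[c]] = c.
Proof.
set w := xi ^+ s.
have w_prim : d.-primitive_root w.
  by rewrite hq in hxi; have := dvdn_prim_root hxi (dvdn_mulr s (dvdnn d)); rewrite mulKn.
have unit_coset (x : F) : x != 0 -> (x ^+ s) ^+ d = 1.
  by move=> x_neq0; rewrite -exprM mulnC -hq expf_card_pred.
move=> c; have [->|c_neq0] := eqVneq c 0.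
  by rewrite horner0_cyc_poly // horner0_cyc_inv_poly // => i; case: (hrt i).
have [l csl] := prim_rootP w_prim (unit_coset c c_neq0).
have ya_neq0 i : (cyc_poly s w a r).[c] / a i != 0.
  by rewrite (horner_cyc_poly_coset w_prim _ _ csl) !mulf_neq0 ?expf_neq0 ?invr_eq0.
rewrite (horner_cyc_inv_poly w_prim) => [|i]; last exact: unit_coset.
have fiber i := cyc_poly_fiber_root w_prim (bij_inj hperm) csl erefl (ya_neq0 i) (hrt_t i).
have l_fiber := cyc_poly_coset_fiber w_prim r csl (ha l).
rewrite (big_pred1 l) => [|i]; first exact: (fiber l l_fiber).1.
by apply/eqP/eqP => [/fiber[]|->].
Qed.
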